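(* Let $g>0$ be an integer and let $P_g(x,y,z,q)$ be the Laurent polynomial \[ P_g(x,y,z,q):=(-1)^gq^{-g}\Big(y^{-g}z^{g}\prod_{i=1}^{g}(yq^i-1)+y^{g}z^{-g}\prod_{i=1}^{g}(zq^i-1)\Big) +\sum_{\substack{0\le t',u'\le g-1\\ t'+u'\le g}}(-1)^{t'+u'}\binom{g}{t';u';g-t'-u'}_q\,y^{u'-t'}z^{t'-u'}q^{t'u'-t'-u'}(x-yq^{t'}-zq^{u'}+1)\prod_{i=1}^{g-t'-1}(zq^i-1)\prod_{i=1}^{g-u'-1}(yq^i-1), \] viewed as a Laurent polynomial in $x,y,z$ with coefficients in $\mathbb{Q}(q)$. Define the weight of a monomial $x^\alpha y^\beta z^\gamma$ to be $2\alpha+\beta+\gamma$. Then among the monomials appearing in $P_g$ with nonzero coefficient there is a unique one of maximal weight, namely $x\,y^{g-1}z^{g-1}$.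
   Context: $[m]!_q=\prod_{i=1}^m(1+q+\dots+q^{i-1})$ and $\binom{g}{a;b;g-a-b}_q=[g]!_q/([a]!_q[b]!_q[g-a-b]!_q)$. *)

From HB Require Import structures.
From mathcomp Require Import all_boot all_order all_algebra.
From mathcomp Require Import fraction.
Set Implicit Arguments. Unset Strict Implicit. Unset Printing Implicit Defensive.
Import Order.TTheory GRing.Theory Num.Theory.
Local Open Scope ring_scope.

Definition Fq : fieldType := {fraction {poly rat}}.
Definition q : Fq := tofrac ('X : {poly rat}).

Definition qfact (m : nat) : Fq :=
  \prod_(1 <= i < m.+1) \sum_(j < i) q ^+ j.
Definition qmultinom (g a b : nat) : Fq :=
  qfact g / (qfact a * qfact b * qfact (g - a - b)%N).

(* Laurent polynomials in x, y, z over Fq, represented as formal finite sums of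
   terms (exponent triple, coefficient); the actual Laurent polynomial is the
   coefficient function [lcoef] below (repetitions are summed). *)
Definition mono := (int * int * int)%type.
Definition lpoly := seq (mono * Fq).

Definition madd (m1 m2 : mono) : mono :=
  (m1.1.1 + m2.1.1, m1.1.2 + m2.1.2, m1.2 + m2.2).

Definition lp_mon (m : mono) (c : Fq) : lpoly := [:: (m, c)].
Definition lp_const (c : Fq) : lpoly := lp_mon (0, 0, 0) c.
Definition lp_add (p r : lpoly) : lpoly := p ++ r.
Definition lp_sum (ps : seq lpoly) : lpoly := flatten ps.
Definition lp_mul (p r : lpoly) : lpoly :=
  [seq (madd t1.1 t2.1, t1.2 * t2.2) | t1 <- p, t2 <- r].
Definition lp_prod (ps : seq lpoly) : lpoly := foldr lp_mul (lp_const 1) ps.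

Definition lcoef (p : lpoly) (m : mono) : Fq :=
  \sum_(t <- p | t.1 == m) t.2.

Definition weight (m : mono) : int := 2 * m.1.1 + m.1.2 + m.2.

Definition X : lpoly := lp_mon (1, 0, 0) 1.
Definition Yc (c : Fq) : lpoly := lp_mon (0, 1, 0) c.
Definition Zc (c : Fq) : lpoly := lp_mon (0, 0, 1) c.

Definition prodY (n : nat) : lpoly :=
  lp_prod [seq lp_add (Yc (q ^+ i)) (lp_const (-1)) | i <- iota 1 n].
Definition prodZ (n : nat) : lpoly :=
  lp_prod [seq lp_add (Zc (q ^+ i)) (lp_const (-1)) | i <- iota 1 n].

Definition Pterm (g t u : nat) : lpoly :=
  lp_mul
    (lp_mon (0, (u%:Z - t%:Z), (t%:Z - u%:Z))
       ((-1) ^+ (t + u) * qmultinom g t u * q ^ ((t * u)%N%:Z - t%:Z - u%:Z)))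
    (lp_mul
       (lp_sum [:: X; Yc (- q ^+ t); Zc (- q ^+ u); lp_const 1])
       (lp_mul (prodZ (g - t - 1)%N) (prodY (g - u - 1)%N))).

Definition Pg (g : nat) : lpoly :=
  lp_add
    (lp_mul (lp_const ((-1) ^+ g * q ^ (- g%:Z)))
       (lp_add
          (lp_mul (lp_mon (0, - g%:Z, g%:Z) 1) (prodY g))
          (lp_mul (lp_mon (0, g%:Z, - g%:Z) 1) (prodZ g))))
    (lp_sum [seq (if (t + u <= g)%N then Pterm g t u else [::])
            | t <- iota 0 g, u <- iota 0 g]).

From HB Require Import structures.
From mathcomp Require Import all_boot all_order all_algebra fraction.
From mathcomp Require Import ring zify.
Set Implicit Arguments. Unset Strict Implicit. Unset Printing Implicit Defensive.
Import Order.TTheory GRing.Theory Num.Theory.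
Local Open Scope ring_scope.

(* Weight is additive, so a product of Laurent polynomials each having a unique
   term of maximal weight again has one, namely the product of those terms.
   Every factor of P_g is of this kind: the top term of (x - y q^t - z q^u + 1)
   is x, that of prod (y q^i - 1) is a power of y.  Hence the (t, u)-summand has
   top monomial x y^(g-1-t) z^(g-1-u), of weight 2g - t - u, while the first
   part of P_g has weight at most g.  So only the (0, 0)-summand reaches weight
   2g, and its top coefficient is a product of nonzero elements of Q(q). *)

Definition lp_wle (p : lpoly) (w : int) :=
  all (fun t : mono * Fq => weight t.1 <= w) p.

(* Every term of p is either m or of smaller weight; m itself may be absent. *)
Definition lp_top (p : lpoly) (m : mono) :=
  all (fun t : mono * Fq => (t.1 == m) || (weight t.1 < weight m)) p.

Definition mscale (n : nat) (m : mono) : mono := (m.1.1 *+ n, m.1.2 *+ n, m.2 *+ n).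

Lemma weight_madd m1 m2 : weight (madd m1 m2) = weight m1 + weight m2.
Proof. rewrite /weight /madd /=; ring. Qed.

Lemma lcoef_cat p r m : lcoef (p ++ r) m = lcoef p m + lcoef r m.
Proof. by rewrite /lcoef big_cat. Qed.

Lemma lcoef_flatten ps m : lcoef (flatten ps) m = \sum_(p <- ps) lcoef p m.
Proof.
elim: ps => [|p ps IH]; first by rewrite big_nil /lcoef big_nil.
by rewrite /= lcoef_cat IH big_cons.
Qed.

Lemma lcoef_mon m c : lcoef (lp_mon m c) m = c.
Proof. by rewrite /lcoef big_cons big_nil eqxx addr0. Qed.

Lemma lp_wle_cat p r w : lp_wle p w -> lp_wle r w -> lp_wle (p ++ r) w.
Proof. by rewrite /lp_wle all_cat => -> ->. Qed.

Lemma lp_wle_le p w w' : lp_wle p w -> w <= w' -> lp_wle p w'.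
Proof. by move=> /allP wp ww'; apply/allP => t /wp /le_trans; apply. Qed.

Lemma lp_wle_mul p r w w' : lp_wle p w -> lp_wle r w' -> lp_wle (lp_mul p r) (w + w').
Proof.
move=> /allP wp /allP wr; apply/all_allpairsP => t1 t2 t1p t2r /=.
by rewrite weight_madd lerD ?wp ?wr.
Qed.

Lemma lcoef_wle0 p w m : lp_wle p w -> w < weight m -> lcoef p m = 0.
Proof.
move=> /allP wp wm; rewrite /lcoef big_seq_cond big1 // => t /andP[/wp wt /eqP t1m].
by move: (le_lt_trans wt wm); rewrite t1m ltxx.
Qed.

Lemma lp_top_cat p r m : lp_top p m -> lp_top r m -> lp_top (p ++ r) m.
Proof. by rewrite /lp_top all_cat => -> ->. Qed.

Lemma lp_top_flatten ps m : all (lp_top^~ m) ps -> lp_top (flatten ps) m.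
Proof. by elim: ps => //= p ps IH /andP[pm /IH]; apply: lp_top_cat. Qed.

Lemma lp_top_wle p m : lp_top p m -> lp_wle p (weight m).
Proof. by move=> /allP pm; apply/allP => t /pm /orP[/eqP-> //|/ltW]. Qed.

Lemma lp_wle_top p w m : lp_wle p w -> w < weight m -> lp_top p m.
Proof. by move=> /allP wp wm; apply/allP => t /wp wt; rewrite (le_lt_trans wt wm) orbT. Qed.

Lemma lp_top_weight_lt p m m' :
  lp_top p m -> lcoef p m' != 0 -> m' != m -> weight m' < weight m.
Proof.
move=> /allP pm pm'0 m'm; apply: contraNT pm'0 => m'_heavy; apply/eqP.
rewrite /lcoef big_seq_cond big1 // => t /andP[/pm tm /eqP t1m'].
by move: tm; rewrite t1m' (negPf m'm) (negPf m'_heavy).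
Qed.

Lemma lp_top_mon m c : lp_top (lp_mon m c) m.
Proof. by rewrite /lp_top /= eqxx. Qed.

Section TopOfProduct.

Variables (p r : lpoly) (m1 m2 : mono).
Hypotheses (p_m1 : lp_top p m1) (r_m2 : lp_top r m2).

Lemma lp_top_mul : lp_top (lp_mul p r) (madd m1 m2).
Proof.
apply/all_allpairsP => t1 t2 t1p t2r /=; rewrite !weight_madd.
move: (allP p_m1 _ t1p) (allP r_m2 _ t2r) => /orP[/eqP-> | lt1] /orP[/eqP-> | lt2].
- by rewrite eqxx.
- by rewrite ltrD2l lt2 orbT.
- by rewrite ltrD2r lt1 orbT.
- by rewrite ltrD // orbT.
Qed.

(* Weights of two terms add up to weight m1 + weight m2 only if both are top. *)
Lemma madd_eq_top t1 t2 : t1 \in p -> t2 \in r ->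
  (madd t1.1 t2.1 == madd m1 m2) = (t1.1 == m1) && (t2.1 == m2).
Proof.
move=> t1p t2r; apply/eqP/andP => [eq_madd | [/eqP-> /eqP->] //].
have := congr1 weight eq_madd; rewrite !weight_madd.
move: (allP p_m1 _ t1p) (allP r_m2 _ t2r) => /orP[/eqP-> | lt1] /orP[/eqP-> | lt2].
- by [].
- by move/addrI => eq2; move: lt2; rewrite eq2 ltxx.
- by move/addIr => eq1; move: lt1; rewrite eq1 ltxx.
- by move=> eqw; move: (ltrD lt1 lt2); rewrite eqw ltxx.
Qed.

Lemma lcoef_mul_top : lcoef (lp_mul p r) (madd m1 m2) = lcoef p m1 * lcoef r m2.
Proof.
rewrite /lcoef /lp_mul big_mkcond big_allpairs_dep /= big_distrl [RHS]big_mkcond /=.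
apply: eq_big_seq => t1 t1p; case: ifP => t1m1; last first.
  by rewrite big1_seq // => t2 /= t2r; rewrite madd_eq_top // t1m1.
rewrite big_distrr [RHS]big_mkcond /=; apply: eq_big_seq => t2 t2r.
by rewrite madd_eq_top // t1m1; case: ifP; rewrite ?mulr0.
Qed.

End TopOfProduct.

Lemma lp_top_prod m ps : all (lp_top^~ m) ps ->
  lp_top (lp_prod ps) (mscale (size ps) m) /\
  lcoef (lp_prod ps) (mscale (size ps) m) = \prod_(p <- ps) lcoef p m.
Proof.
elim: ps => [_ | p ps IH /= /andP[p_m /IH[ps_top ps_coef]]].
  by rewrite /mscale /= !mulr0n big_nil; split; [|apply: lcoef_mon].
have -> : mscale (size ps).+1 m = madd m (mscale (size ps) m) by rewrite /mscale /madd !mulrS.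
by rewrite lcoef_mul_top // big_cons ps_coef; split; first exact: lp_top_mul.
Qed.

Lemma lp_top_affine e c : 0 < weight e ->
  lp_top (lp_add (lp_mon e c) (lp_const (-1))) e /\
  lcoef (lp_add (lp_mon e c) (lp_const (-1))) e = c.
Proof.
have w0 : weight (0, 0, 0) = 0 by rewrite /weight /= mulr0 addr0.
move=> we; have e0 : ((0, 0, 0) == e) = false.
  by apply: contraTF we => /eqP<-; rewrite w0 ltxx.
split; first by rewrite /lp_top /= eqxx w0 we orbT.
by rewrite /lcoef /= !big_cons big_nil eqxx e0 !addr0.
Qed.

Lemma lp_top_prod_affine e (c : nat -> Fq) s : 0 < weight e ->
  let P := lp_prod [seq lp_add (lp_mon e (c i)) (lp_const (-1)) | i <- s] in
  lp_top P (mscale (size s) e) /\ lcoef P (mscale (size s) e) = \prod_(i <- s) c i.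
Proof.
move=> we P; have := @lp_top_prod e [seq lp_add (lp_mon e (c i)) (lp_const (-1)) | i <- s].
rewrite size_map big_map; case.
  by apply/allP => _ /mapP[i _ ->]; case: (lp_top_affine (c i) we).
by move=> Ptop Pcoef; split; rewrite // Pcoef; apply: eq_bigr => i _; case: (lp_top_affine (c i) we).
Qed.

Lemma q_neq0 : q != 0.
Proof. by rewrite /q tofrac_eq0 polyX_eq0. Qed.

Lemma prod_qpow_neq0 s : \prod_(i <- s) q ^+ i != 0.
Proof. by rewrite prodf_seq_neq0; apply/allP => i _ /=; rewrite expf_neq0 ?q_neq0. Qed.

Lemma prodY_top n : lp_top (prodY n) (0, n%:Z, 0) /\ lcoef (prodY n) (0, n%:Z, 0) != 0.
Proof.
have [] := @lp_top_prod_affine (0, 1, 0) (fun i => q ^+ i) (iota 1 n) isT.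
by rewrite size_iota /mscale /= !mul0rn -natz => -> ->; rewrite prod_qpow_neq0.
Qed.

Lemma prodZ_top n : lp_top (prodZ n) (0, 0, n%:Z) /\ lcoef (prodZ n) (0, 0, n%:Z) != 0.
Proof.
have [] := @lp_top_prod_affine (0, 0, 1) (fun i => q ^+ i) (iota 1 n) isT.
by rewrite size_iota /mscale /= !mul0rn -natz => -> ->; rewrite prod_qpow_neq0.
Qed.

Lemma qfact_neq0 m : qfact m != 0.
Proof.
rewrite /qfact prodf_seq_neq0; apply/allP => -[|k]; rewrite mem_index_iota // => _ /=.
(* [k+1]_q is the image in Q(q) of a polynomial with constant coefficient 1. *)
have -> : \sum_(j < k.+1) q ^+ j = tofrac (\sum_(j < k.+1) ('X : {poly rat}) ^+ j).
  by rewrite rmorph_sum; apply: eq_bigr => j _; rewrite rmorphXn.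
rewrite tofrac_eq0; apply/eqP => /(congr1 (fun p : {poly rat} => p`_0)).
rewrite coef_sum coef0 big_ord_recl /= expr0 coef1 big1 ?addr0 //.
by move=> j _; rewrite coefXn.
Qed.

Lemma qmultinom_neq0 g a b : qmultinom g a b != 0.
Proof. by rewrite /qmultinom mulf_neq0 ?invr_neq0 ?mulf_neq0 ?qfact_neq0. Qed.

Lemma Pterm_top g t u : (t < g)%N -> (u < g)%N ->
  let m := (1%:Z, (g - t - 1)%N%:Z, (g - u - 1)%N%:Z) in
  lp_top (Pterm g t u) m /\ lcoef (Pterm g t u) m != 0.
Proof.
move=> tg ug m; rewrite /Pterm; set S := lp_sum _.
have S_top : lp_top S (1, 0, 0) by rewrite /lp_top /= ?eqxx.
have S_coef : lcoef S (1, 0, 0) = 1 by rewrite /lcoef /= !big_cons big_nil /= !addr0.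
have [Z_top Z_coef] := prodZ_top (g - t - 1).
have [Y_top Y_coef] := prodY_top (g - u - 1).
have -> : m = madd (0, u%:Z - t%:Z, t%:Z - u%:Z)
                (madd (1, 0, 0) (madd (0, 0, (g - t - 1)%N%:Z) (0, (g - u - 1)%N%:Z, 0))).
  by rewrite /m /madd /=; congr (_, _, _); lia.
have ZY_top := lp_top_mul Z_top Y_top.
have SZY_top := lp_top_mul S_top ZY_top.
split; first exact: lp_top_mul (lp_top_mon _ _) SZY_top.
rewrite (lcoef_mul_top (lp_top_mon _ _) SZY_top) (lcoef_mul_top S_top ZY_top).
rewrite (lcoef_mul_top Z_top Y_top) lcoef_mon S_coef mul1r.
apply: mulf_neq0; last exact: mulf_neq0 Z_coef Y_coef.
apply: mulf_neq0; last exact: expfz_neq0 q_neq0.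
by apply: mulf_neq0; [rewrite signr_eq0 | apply: qmultinom_neq0].
Qed.

Definition Pg_head (g : nat) : lpoly :=
  lp_mul (lp_const ((-1) ^+ g * q ^ (- g%:Z)))
    (lp_add (lp_mul (lp_mon (0, - g%:Z, g%:Z) 1) (prodY g))
            (lp_mul (lp_mon (0, g%:Z, - g%:Z) 1) (prodZ g))).

Definition Pg_summand (g t u : nat) : lpoly :=
  if (t + u <= g)%N then Pterm g t u else [::].

Lemma PgE g :
  Pg g = lp_add (Pg_head g) (lp_sum [seq Pg_summand g t u | t <- iota 0 g, u <- iota 0 g]).
Proof. reflexivity. Qed.

Lemma Pg_head_wle g : lp_wle (Pg_head g) g%:Z.
Proof.
have mon_wle m c : weight m = 0 -> lp_wle (lp_mon m c) 0.
  by move=> wm; rewrite -wm; apply: lp_top_wle (lp_top_mon _ _).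
have [Y_top _] := prodY_top g; have [Z_top _] := prodZ_top g.
have Y_wle : lp_wle (prodY g) g%:Z.
  by have := lp_top_wle Y_top; rewrite /weight /= mulr0 add0r addr0.
have Z_wle : lp_wle (prodZ g) g%:Z.
  by have := lp_top_wle Z_top; rewrite /weight /= mulr0 add0r.
rewrite -[g%:Z]add0r; apply: lp_wle_mul.
  by apply: mon_wle; rewrite /weight /= mulr0 addr0.
apply: lp_wle_cat; rewrite -[g%:Z]add0r; apply: lp_wle_mul => //;
  by apply: mon_wle; rewrite /weight /=; ring.
Qed.

Lemma Pg_summand_wle g t u : (t < g)%N -> (u < g)%N -> (0 < t + u)%N ->
  lp_wle (Pg_summand g t u) (2 * g%:Z - 1).
Proof.
move=> tg ug tu_gt0; rewrite /Pg_summand; case: ifP => // _.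
have [top _] := Pterm_top tg ug.
by apply: lp_wle_le (lp_top_wle top) _; rewrite /weight /=; lia.
Qed.

Local Notation top_mono g := (1%:Z, (g.-1)%:Z, (g.-1)%:Z).

Lemma weight_Pg_top g : (0 < g)%N -> 2 * g%:Z - 1 < weight (top_mono g).
Proof. by move=> g_gt0; rewrite /weight /=; lia. Qed.

Lemma Pg_top g : (0 < g)%N -> lp_top (Pg g) (top_mono g).
Proof.
move=> g_gt0; have w_top := weight_Pg_top g_gt0.
rewrite PgE; apply: lp_top_cat.
  by apply: lp_wle_top w_top; apply: lp_wle_le (Pg_head_wle g) _; lia.
apply: lp_top_flatten; apply/all_allpairsP => t u; rewrite !mem_iota /= => tg ug.
case: (posnP (t + u)) => [tu0 | tu_gt0].
  have [-> ->] : t = 0%N /\ u = 0%N by lia.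
  have [top _] := Pterm_top g_gt0 g_gt0.
  by rewrite /Pg_summand add0n leq0n; rewrite subn0 subn1 in top.
exact: lp_wle_top (Pg_summand_wle tg ug tu_gt0) w_top.
Qed.

Lemma lcoef_Pg_top g : (0 < g)%N ->
  lcoef (Pg g) (top_mono g) = lcoef (Pterm g 0 0) (top_mono g).
Proof.
move=> g_gt0; have w_top := weight_Pg_top g_gt0.
have head_wle : lp_wle (Pg_head g) (2 * g%:Z - 1) by apply: lp_wle_le (Pg_head_wle g) _; lia.
rewrite PgE lcoef_cat (lcoef_wle0 head_wle w_top) add0r.
rewrite lcoef_flatten big_allpairs_dep /=.
have zero_in : 0%N \in iota 0 g by rewrite mem_iota.
have low_zero t u : (t < g)%N -> (u < g)%N -> (0 < t + u)%N ->
    lcoef (Pg_summand g t u) (top_mono g) = 0.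
  by move=> tg ug tu_gt0; apply: lcoef_wle0 w_top; apply: Pg_summand_wle.
rewrite (bigD1_seq 0%N zero_in (iota_uniq 0 g)) /=.
rewrite [X in _ + X]big1_seq ?addr0; last first.
  move=> t /andP[t_neq0]; rewrite mem_iota => /andP[_ tg].
  apply: big1_seq => u /andP[_]; rewrite mem_iota => /andP[_ ug].
  by apply: low_zero; rewrite // addn_gt0 lt0n t_neq0.
rewrite (bigD1_seq 0%N zero_in (iota_uniq 0 g)) /=.
rewrite [X in _ + X]big1_seq ?addr0; last first.
  by move=> u /andP[u_neq0]; rewrite mem_iota => /andP[_ ug]; apply: low_zero; rewrite // lt0n.
by rewrite /Pg_summand add0n leq0n.
Qed.

Theorem proposition5p5 (g : nat) (hg : (0 < g)%N) :
  let mmax : mono := (1%:Z, (g.-1)%:Z, (g.-1)%:Z) in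
  lcoef (Pg g) mmax != 0 /\
  (forall m : mono, lcoef (Pg g) m != 0 -> m != mmax -> weight m < weight mmax).
Proof.
move=> mmax; split; last by move=> m; apply: lp_top_weight_lt (Pg_top hg).
have [_ top_neq0] := Pterm_top hg hg.
rewrite /mmax (lcoef_Pg_top hg); rewrite subn0 subn1 in top_neq0.
exact: top_neq0.
Qed.
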